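(* Let $C_*>1$. There exists a constant $C>0$ depending only on $C_*$ such that the following holds. Let $\mathscr{T}$ be a $C_*$-regular triangular complex in $\mathbb{R}^3$ and $n$ a pseudo-unit edge director on $\mathscr{T}$. If $e=\kappa\cap\kappa'\in\mathscr{E}(\mathscr{T})$ satisfies $(\mathrm{diam}\,\kappa)(|Dn_\kappa|+|Dn_{\kappa'}|)<C$, then \[ |n(e)-\bar n(\kappa)|\le C'\,(\mathrm{diam}\,\kappa)(|Dn_\kappa|+|Dn_{\kappa'}|) \] for a constant $C'$ depending only on $C_*$.
   Context: A triangle is $\kappa=\mathrm{conv}(x,y,z)\subset\mathbb{R}^3$ with $x,y,z$ not collinear, with unit normal $\bar n(\kappa)$ one (chosen) of $\pm\frac{(y-x)\times(z-x)}{|(y-x)\times(z-x)|}$. A triangular complex is a finite family of triangles any two distinct of which meet in the empty set, a common vertex, or a whole common edge; $\mathscr{E}(\mathscr{T})$ is its set of edges; it is $C_*$-regular if $\mathcal{H}^2(\kappa)\ge C_*^{-1}(\mathrm{diam}\,\kappa)^2$ for all $\kappa$. For an edge $e=\kappa\cap\kappa'$, let $n_0(e)=\frac{\bar n(\kappa)+\bar n(\kappa')}{|\bar n(\kappa)+\bar n(\kappa')|}$. A pseudo-unit edge director is a map $n:\mathscr{E}(\mathscr{T})\to\mathbb{R}^3$ with $n(e)\cdot\tau(e)=0$ ($\tau(e)$ a unit vector along $e$) and $n(e)\cdot n_0(e)=1$ for every edge $e$. On each triangle $\kappa$, $n$ is extended to the unique affine map $\kappa\to\mathbb{R}^3$ taking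 the value $n(e)$ at the midpoint of each edge $e$ of $\kappa$, and $Dn_\kappa\in\mathbb{R}^{3\times3}$ is its constant gradient precomposed with the orthogonal projection onto the plane of $\kappa$. *)

From HB Require Import structures.
From mathcomp Require Import all_boot all_order all_algebra.
From mathcomp Require Import all_classical all_reals.

Set Implicit Arguments.
Unset Strict Implicit.
Unset Printing Implicit Defensive.

Import Order.TTheory GRing.Theory Num.Theory.
Local Open Scope classical_set_scope.
Local Open Scope ring_scope.

Section Geometry.
Variable R : realType.
Notation vec := 'rV[R]_3.

Definition i0 : 'I_3 := @Ordinal 3 0 isT.
Definition i1 : 'I_3 := @Ordinal 3 1 isT.
Definition i2 : 'I_3 := @Ordinal 3 2 isT.

Definition dotv (u v : vec) : R := \sum_(i < 3) u 0 i * v 0 i.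
Definition enorm (v : vec) : R := Num.sqrt (dotv v v).
Definition unitv (v : vec) : vec := (enorm v)^-1 *: v.
Definition cross (u v : vec) : vec :=
  \row_(i < 3)
    (if i == i0 then u 0 i1 * v 0 i2 - u 0 i2 * v 0 i1
     else if i == i1 then u 0 i2 * v 0 i0 - u 0 i0 * v 0 i2
     else u 0 i0 * v 0 i1 - u 0 i1 * v 0 i0).

Definition fnorm (M : 'M[R]_3) : R := Num.sqrt (\sum_(i < 3) \sum_(j < 3) M i j ^+ 2).

Definition seg (a b : vec) : set vec :=
  [set p | exists t : R, 0 <= t <= 1 /\ p = (1 - t) *: a + t *: b].
Definition midp (a b : vec) : vec := 2^-1 *: (a + b).
Definition tau (a b : vec) : vec := unitv (b - a).

(* A triangle: three vertices x,y,z plus the choice of unit normal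
   (true: +(y-x)x(z-x)/|..|, false: its opposite). *)
Definition tri := (vec * vec * vec * bool)%type.
Definition vx (k : tri) : vec := k.1.1.1.
Definition vy (k : tri) : vec := k.1.1.2.
Definition vz (k : tri) : vec := k.1.2.
Definition sgn (k : tri) : bool := k.2.

Definition noncollinear (k : tri) : Prop :=
  cross (vy k - vx k) (vz k - vx k) != 0.

Definition hull (k : tri) : set vec :=
  [set p | exists a b c : R, [/\ 0 <= a, 0 <= b, 0 <= c, a + b + c = 1 &
            p = a *: vx k + b *: vy k + c *: vz k]].

Definition is_vertex (k : tri) (v : vec) : Prop := v = vx k \/ v = vy k \/ v = vz k.
Definition is_edge (k : tri) (e : set vec) : Prop :=
  e = seg (vx k) (vy k) \/ e = seg (vy k) (vz k) \/ e = seg (vz k) (vx k).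

Definition nbar (k : tri) : vec :=
  (if sgn k then 1 else -1) *: unitv (cross (vy k - vx k) (vz k - vx k)).

Definition area (k : tri) : R := 2^-1 * enorm (cross (vy k - vx k) (vz k - vx k)).
Definition diam (k : tri) : R :=
  sup [set d | exists p q, [/\ hull k p, hull k q & d = enorm (p - q)]].

Definition tri_complex (T : seq tri) : Prop :=
  (forall k, k \in T -> noncollinear k) /\
  (forall k k', k \in T -> k' \in T -> hull k = hull k' -> k = k') /\
  (forall k k', k \in T -> k' \in T -> hull k <> hull k' ->
     let I := hull k `&` hull k' in
     I = set0 \/
     (exists v, [/\ is_vertex k v, is_vertex k' v & I = [set v]]) \/
     (exists e, [/\ is_edge k e, is_edge k' e & I = e])).

Definition edges (T : seq tri) : set (set vec) :=
  [set e | exists k, k \in T /\ is_edge k e].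

Definition regular (Cs : R) (T : seq tri) : Prop :=
  forall k, k \in T -> area k >= Cs^-1 * diam k ^+ 2.

Definition n0 (k k' : tri) : vec := unitv (nbar k + nbar k').

Definition pseudo_unit (T : seq tri) (n : set vec -> vec) : Prop :=
  (forall k, k \in T ->
     [/\ dotv (n (seg (vx k) (vy k))) (tau (vx k) (vy k)) = 0,
         dotv (n (seg (vy k) (vz k))) (tau (vy k) (vz k)) = 0 &
         dotv (n (seg (vz k) (vx k))) (tau (vz k) (vx k)) = 0]) /\
  (forall k k', k \in T -> k' \in T -> hull k <> hull k' ->
     edges T (hull k `&` hull k') ->
     dotv (n (hull k `&` hull k')) (n0 k k') = 1).

Definition projP (k : tri) : 'M[R]_3 := 1%:M - (nbar k)^T *m nbar k.

(* M is Dn_kappa: the (constant) gradient A of the affine map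
   p |-> p *m A + b taking the value n(e) at the midpoint of each edge e
   of kappa, precomposed with the orthogonal projection onto the plane of
   kappa.  (Row-vector convention: the differential is v |-> v *m A.) *)
Definition isDn (k : tri) (n : set vec -> vec) (M : 'M[R]_3) : Prop :=
  exists (A : 'M[R]_3) (b : vec),
    [/\ midp (vx k) (vy k) *m A + b = n (seg (vx k) (vy k)),
        midp (vy k) (vz k) *m A + b = n (seg (vy k) (vz k)),
        midp (vz k) (vx k) *m A + b = n (seg (vz k) (vx k)) &
        M = projP k *m A].

End Geometry.

From HB Require Import structures.
From mathcomp Require Import all_boot all_order all_algebra.
From mathcomp Require Import all_classical all_reals.
From mathcomp Require Import ring lra.

Set Implicit Arguments.
Unset Strict Implicit.
Unset Printing Implicit Defensive.
Import Order.TTheory GRing.Theory Num.Theory.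
Local Open Scope classical_set_scope.
Local Open Scope ring_scope.

(* Let [e = [p, q]] be an edge of [κ] with third vertex [r], and [e' = [r, p]].
   The affine interpolant of [n] on [κ] maps the midpoint of [e] to [n(e)] and
   that of [e'] to [n(e')]; their difference [(q - r) / 2] is tangent to [κ],
   so [|n(e) - n(e')| <= |q - r| |Dn_κ| / 2].  As [n(e') ⊥ r - p], this bounds
   [n(e)·(r - p)], and together with [n(e) ⊥ q - p] it bounds the component of
   [n(e)] tangent to [κ] by [|q - p| |r - p| |q - r| |Dn_κ| / (2 |(q - p) × (r - p)|)],
   i.e. by [C_* |e| |Dn_κ| / 4] by regularity.  Hence [n(e)] is close to both
   lines [R n̄(κ)] and [R n̄(κ')]; since [n(e)·n_0(e) = 1] with [n_0(e)] their
   bisector, [n(e)] must be close to [n̄(κ)] itself. *)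

Section EdgeDirector.
Variable R : realType.
Notation vec := 'rV[R]_3.
Implicit Types (u v w : vec) (c : R).

Lemma sum_ord3 (f : 'I_3 -> R) : \sum_(i < 3) f i = f i0 + f i1 + f i2.
Proof. by rewrite !big_ord_recr big_ord0 /= add0r; congr (_ + _ + _); apply/congr1/val_inj. Qed.

Lemma row3P u v : u 0 i0 = v 0 i0 -> u 0 i1 = v 0 i1 -> u 0 i2 = v 0 i2 -> u = v.
Proof.
move=> h0 h1 h2; apply/rowP => -[[|[|[|//]]] lt_i3].
- by rewrite (_ : Ordinal lt_i3 = i0) //; apply: val_inj.
- by rewrite (_ : Ordinal lt_i3 = i1) //; apply: val_inj.
- by rewrite (_ : Ordinal lt_i3 = i2) //; apply: val_inj.
Qed.

Lemma dotvE u v : dotv u v = u 0 i0 * v 0 i0 + u 0 i1 * v 0 i1 + u 0 i2 * v 0 i2.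
Proof. exact: sum_ord3. Qed.

Lemma cross_i0 u v : cross u v 0 i0 = u 0 i1 * v 0 i2 - u 0 i2 * v 0 i1.
Proof. by rewrite mxE. Qed.
Lemma cross_i1 u v : cross u v 0 i1 = u 0 i2 * v 0 i0 - u 0 i0 * v 0 i2.
Proof. by rewrite mxE. Qed.
Lemma cross_i2 u v : cross u v 0 i2 = u 0 i0 * v 0 i1 - u 0 i1 * v 0 i0.
Proof. by rewrite mxE. Qed.

Definition coordE := (dotvE, cross_i0, cross_i1, cross_i2, mxE).

Lemma dotvC u v : dotv u v = dotv v u.
Proof. by rewrite !coordE; ring. Qed.
Lemma dotvDl u v w : dotv (v + w) u = dotv v u + dotv w u.
Proof. by rewrite !coordE; ring. Qed.
Lemma dotvDr u v w : dotv u (v + w) = dotv u v + dotv u w.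
Proof. by rewrite !coordE; ring. Qed.
Lemma dotvBl u v w : dotv (v - w) u = dotv v u - dotv w u.
Proof. by rewrite !coordE; ring. Qed.
Lemma dotvBr u v w : dotv u (v - w) = dotv u v - dotv u w.
Proof. by rewrite !coordE; ring. Qed.
Lemma dotvZl c u v : dotv (c *: v) u = c * dotv v u.
Proof. by rewrite !coordE; ring. Qed.
Lemma dotvZr c u v : dotv u (c *: v) = c * dotv u v.
Proof. by rewrite !coordE; ring. Qed.

Lemma dotvv_ge0 v : 0 <= dotv v v.
Proof. by rewrite dotvE; nra. Qed.

Lemma dotvv_gt0 v : v != 0 -> 0 < dotv v v.
Proof.
apply: contraNT; rewrite -leNgt dotvE => le_v0; apply/eqP/row3P; rewrite mxE.
- by apply/eqP; rewrite -sqrf_eq0 eq_le sqr_ge0 andbT; nra.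
- by apply/eqP; rewrite -sqrf_eq0 eq_le sqr_ge0 andbT; nra.
- by apply/eqP; rewrite -sqrf_eq0 eq_le sqr_ge0 andbT; nra.
Qed.

Lemma lagrange_identity u v :
  dotv u u * dotv v v - dotv u v ^+ 2 = dotv (cross u v) (cross u v).
Proof. by rewrite !coordE; ring. Qed.

Lemma cross_crossr v a b : cross v (cross a b) = dotv v b *: a - dotv v a *: b.
Proof. by apply: row3P; rewrite !coordE; ring. Qed.

Lemma dotv_side_cross (p q r : vec) :
  dotv (q - r) (cross (q - p) (r - p)) = 0.
Proof. by rewrite !coordE; ring. Qed.

Lemma enorm_ge0 v : 0 <= enorm v.
Proof. exact: sqrtr_ge0. Qed.

Lemma enorm_gt0 v : v != 0 -> 0 < enorm v.
Proof. by move=> v0; rewrite sqrtr_gt0 dotvv_gt0. Qed.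

Lemma sqr_enorm v : enorm v ^+ 2 = dotv v v.
Proof. by rewrite sqr_sqrtr // dotvv_ge0. Qed.

Lemma enorm_le_sqr c v : 0 <= c -> dotv v v <= c ^+ 2 -> enorm v <= c.
Proof. by move=> c0 le_vc; rewrite -(ger0_norm c0) -sqrtr_sqr ler_sqrt ?sqr_ge0. Qed.

Lemma enorm_unit v : dotv v v = 1 -> enorm v = 1.
Proof. by rewrite /enorm => ->; rewrite sqrtr1. Qed.

Lemma enormZ c v : enorm (c *: v) = `|c| * enorm v.
Proof.
rewrite -sqrtr_sqr -sqrtrM ?sqr_ge0 //; congr Num.sqrt.
by rewrite dotvZl dotvZr mulrA -expr2.
Qed.

Lemma dotv_sqr_le u v : dotv u v ^+ 2 <= dotv u u * dotv v v.
Proof. by rewrite -subr_ge0 lagrange_identity dotvv_ge0. Qed.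

Lemma normr_dotv_le u v : `|dotv u v| <= enorm u * enorm v.
Proof.
rewrite -sqrtrM ?dotvv_ge0 // -sqrtr_sqr ler_sqrt ?dotv_sqr_le //.
by rewrite mulr_ge0 ?dotvv_ge0.
Qed.

Lemma enormD u v : enorm (u + v) <= enorm u + enorm v.
Proof.
apply: enorm_le_sqr; first by rewrite addr_ge0 ?enorm_ge0.
rewrite dotvDl !dotvDr (dotvC v u) -!sqr_enorm.
have := ler_norm (dotv u v); have := normr_dotv_le u v; nra.
Qed.

Lemma enorm_mulmx_le v (M : 'M[R]_3) : enorm (v *m M) <= enorm v * fnorm M.
Proof.
rewrite -sqrtrM ?dotvv_ge0 // ler_sqrt; last first.
  by rewrite mulr_ge0 ?dotvv_ge0 // !sumr_ge0 // => *; rewrite sumr_ge0 // => *; rewrite sqr_ge0.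
have col_dot j : (v *m M) 0 j = dotv v (\row_i M i j).
  by rewrite mxE; apply: eq_bigr => i _; rewrite mxE.
have := dotv_sqr_le v (\row_i M i i0); have := dotv_sqr_le v (\row_i M i i1).
have := dotv_sqr_le v (\row_i M i i2).
rewrite -!col_dot [dotv (v *m M) _]dotvE !sum_ord3 !dotvE !mxE; lra.
Qed.

Lemma mulmx_tr_row u N : u *m (N^T *m N) = dotv u N *: N.
Proof.
rewrite mulmxA; apply/rowP => j; rewrite !mxE big_ord1 !mxE.
by congr (_ * _); apply: eq_bigr => i _; rewrite mxE.
Qed.

Lemma sqr_sign (s : bool) : (if s then 1 else -1) ^+ 2 = 1 :> R.
Proof. by case: s; rewrite ?sqrrN expr1n. Qed.

Lemma dotv_scale_unitv c v : c ^+ 2 = 1 -> v != 0 ->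
  dotv (c *: unitv v) (c *: unitv v) = 1.
Proof.
move=> c2 v0; rewrite /unitv scalerA dotvZl dotvZr -sqr_enorm mulrA -expr2.
by rewrite exprMn c2 mul1r exprVn mulVf // expf_neq0 // gt_eqF ?enorm_gt0.
Qed.

Definition rejection v N : vec := v - dotv v N *: N.

Lemma dotv_rejection_self v N : dotv N N = 1 ->
  dotv (rejection v N) (rejection v N) = dotv v v - dotv v N ^+ 2.
Proof. by move=> NN; rewrite !(dotvBl, dotvBr, dotvZl, dotvZr) NN (dotvC N v); ring. Qed.

Lemma bisector_coord_le P Q v (eps : R) :
  dotv P P = 1 -> dotv Q Q = 1 -> 0 < enorm (P + Q) ->
  dotv v (P + Q) = enorm (P + Q) -> enorm (rejection v P) <= eps ->
  `|dotv v P * enorm (P + Q) / 2 - 1| <= eps.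
Proof.
set s := enorm (P + Q); set a := dotv v P => PP QQ s_gt0 vS le_w.
have PQ : dotv P Q = s ^+ 2 / 2 - 1.
  by rewrite sqr_enorm dotvDl !dotvDr PP QQ (dotvC Q P); field.
have wS : dotv (rejection v P) (P + Q) = - (s * (a * s / 2 - 1)).
  by rewrite dotvBl vS dotvZl dotvDr PP PQ -/a; field.
have : `|s * (a * s / 2 - 1)| <= eps * s.
  rewrite -normrN -wS; apply: le_trans (normr_dotv_le _ _) _.
  by apply: ler_wpM2r => //; exact: ltW.
by rewrite normrM (gtr0_norm s_gt0) mulrC ler_pM2r.
Qed.

Lemma bisector_near_unit N N' v (eps eps' : R) :
  dotv N N = 1 -> dotv N' N' = 1 -> dotv v (unitv (N + N')) = 1 ->
  enorm (rejection v N) <= eps -> enorm (rejection v N') <= eps' ->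
  eps + eps' <= 2^-1 -> enorm (v - N) <= 4 * (eps + eps').
Proof.
move=> NN NN' hv le_w le_w' small.
set s := enorm (N + N'); set a := dotv v N; set b := dotv v N'.
have eps_ge0 : 0 <= eps := le_trans (enorm_ge0 _) le_w.
have eps'_ge0 : 0 <= eps' := le_trans (enorm_ge0 _) le_w'.
have s_neq0 : s != 0.
  by apply/eqP => s0; move: hv; rewrite dotvZr -/s s0 invr0 mul0r => /eqP; rewrite eq_sym oner_eq0.
have s_gt0 : 0 < s by rewrite lt_def s_neq0 enorm_ge0.
have vS : dotv v (N + N') = s.
  by apply: (mulfI (invr_neq0 s_neq0)); rewrite -dotvZr hv mulVf.
have ab : a + b = s by rewrite -vS dotvDr.
have := bisector_coord_le NN NN' s_gt0 vS le_w.
rewrite -/s -/a ler_norml => /andP[a_lo a_hi].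
have := @bisector_coord_le N' N v eps' NN' NN.
rewrite addrC -/s -/b => /(_ s_gt0 vS le_w'); rewrite ler_norml => /andP[b_lo b_hi].
(* [a s / 2] and [b s / 2] are both close to 1 while [a + b = s <= 2]: this
   forces [s] close to 2 and then [a] close to 1. *)
have s2 : s ^+ 2 <= 4.
  have : dotv N N' <= 1.
    by have := normr_dotv_le N N'; rewrite !enorm_unit // mul1r => /(le_trans (ler_norm _)).
  by rewrite sqr_enorm dotvDl !dotvDr NN NN' (dotvC N' N); lra.
have s_ge1 : 1 <= s by nra.
have s_le2 : 2 - s <= eps + eps' by nra.
have a_near1 : `|a - 1| <= 3 * eps + eps' by rewrite ler_norml; apply/andP; split; nra.
have -> : v - N = (a - 1) *: N + rejection v N by apply/rowP => i; rewrite /rejection /a !mxE; ring.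
apply: le_trans (enormD _ _) _; rewrite enormZ enorm_unit //; lra.
Qed.

Lemma midp_subr_mulmx (p q r b : vec) (A : 'M[R]_3) :
  (midp p q *m A + b) - (midp r p *m A + b) = (2^-1 *: (q - r)) *m A.
Proof.
rewrite opprD addrACA subrr addr0 -mulmxBl; congr (_ *m _).
by apply: row3P; rewrite !mxE; ring.
Qed.

Lemma mulmx_proj_orth x N (A : 'M[R]_3) : dotv x N = 0 ->
  x *m ((1%:M - N^T *m N) *m A) = x *m A.
Proof. by move=> xN; rewrite mulmxA mulmxBr mulmx1 mulmx_tr_row xN scale0r subr0. Qed.

Lemma enorm_rejection_cross c v a b : c ^+ 2 = 1 -> cross a b != 0 -> dotv v a = 0 ->
  enorm (rejection v (c *: unitv (cross a b))) * enorm (cross a b) = enorm a * `|dotv v b|.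
Proof.
set nn := cross a b => c2 nn0 va.
have vN : dotv v (c *: unitv nn) ^+ 2 * dotv nn nn = dotv v nn ^+ 2.
  rewrite /unitv scalerA dotvZr exprMn -sqr_enorm exprMn c2 mul1r exprVn mulrAC.
  by rewrite mulVf ?mul1r // expf_neq0 // gt_eqF ?enorm_gt0.
apply/eqP; rewrite -(@eqrXn2 _ 2) ?mulr_ge0 ?enorm_ge0 //.
rewrite !exprMn !sqr_enorm dotv_rejection_self ?dotv_scale_unitv // mulrBl vN.
rewrite lagrange_identity cross_crossr va scale0r subr0 real_normK ?num_real //.
by rewrite dotvZl dotvZr; apply/eqP; ring.
Qed.

Lemma rejection_interpolant_le (p q r b v u N : vec) (A : 'M[R]_3) c :
  N = c *: unitv (cross (q - p) (r - p)) -> c ^+ 2 = 1 ->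
  cross (q - p) (r - p) != 0 ->
  midp p q *m A + b = v -> midp r p *m A + b = u ->
  dotv v (q - p) = 0 -> dotv u (p - r) = 0 ->
  enorm (rejection v N) * enorm (cross (q - p) (r - p)) <=
    enorm (q - p) * enorm (r - p) * enorm (q - r) * fnorm ((1%:M - N^T *m N) *m A) / 2.
Proof.
set M := (1%:M - N^T *m N) *m A => hN c2 nn0 hv hu v_qp u_pr.
have d_orth : dotv (2^-1 *: (q - r)) N = 0.
  by rewrite hN /unitv dotvZl !dotvZr dotv_side_cross !mulr0.
have vu : v - u = (2^-1 *: (q - r)) *m M.
  by rewrite mulmx_proj_orth // -hv -hu midp_subr_mulmx.
have u_rp : dotv u (r - p) = 0 by rewrite -opprB -scaleN1r dotvZr u_pr mulr0.
have le_vrp : `|dotv v (r - p)| <= enorm (q - r) / 2 * fnorm M * enorm (r - p).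
  rewrite -[v](subrK u) dotvDl u_rp addr0 vu.
  apply: le_trans (normr_dotv_le _ _) _; apply: ler_wpM2r; first exact: enorm_ge0.
  apply: le_trans (enorm_mulmx_le _ _) _.
  by rewrite enormZ gtr0_norm ?invr_gt0 // (mulrC 2^-1).
rewrite hN enorm_rejection_cross //.
have := ler_wpM2l (enorm_ge0 (q - p)) le_vrp; lra.
Qed.

Implicit Types (k : tri R) (p q r : vec).

Lemma seg_start p q : seg p q p.
Proof. by exists 0; split; rewrite ?lexx ?ler01 // subr0 scale1r scale0r addr0. Qed.

Lemma seg_end p q : seg p q q.
Proof. by exists 1; split; rewrite ?lexx ?ler01 // subrr scale0r scale1r add0r. Qed.

Lemma hull_vx k : hull k (vx k).
Proof. by exists 1, 0, 0; split; rewrite ?lexx ?ler01 ?scale0r ?scale1r ?addr0 ?add0r. Qed.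
Lemma hull_vy k : hull k (vy k).
Proof. by exists 0, 1, 0; split; rewrite ?lexx ?ler01 ?scale0r ?scale1r ?addr0 ?add0r. Qed.
Lemma hull_vz k : hull k (vz k).
Proof. by exists 0, 0, 1; split; rewrite ?lexx ?ler01 ?scale0r ?scale1r ?addr0 ?add0r. Qed.

Lemma hull_enorm_le k p : hull k p ->
  enorm p <= enorm (vx k) + enorm (vy k) + enorm (vz k).
Proof.
case=> a [b [c [a0 b0 c0 abc1 ->]]].
apply: le_trans (enormD _ _) _; apply: le_trans (lerD (enormD _ _) (lexx _)) _.
rewrite !enormZ !ger0_norm //.
have := enorm_ge0 (vx k); have := enorm_ge0 (vy k); have := enorm_ge0 (vz k); nra.
Qed.

Lemma diam_ub k p q : hull k p -> hull k q -> enorm (p - q) <= diam k.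
Proof.
move=> kp kq; apply: ub_le_sup; last by exists p, q.
exists (2 * (enorm (vx k) + enorm (vy k) + enorm (vz k))) => _ [p' [q' [kp' kq' ->]]].
apply: le_trans (enormD _ _) _; rewrite -scaleN1r enormZ normrN normr1 mul1r.
by have := hull_enorm_le kp'; have := hull_enorm_le kq'; lra.
Qed.

Lemma cross_rot p q r : cross (r - q) (p - q) = cross (q - p) (r - p).
Proof. by apply: row3P; rewrite !coordE; ring. Qed.

Lemma cross_neq0_vertices p q r : cross (q - p) (r - p) != 0 ->
  [/\ p != q, q != r & r != p].
Proof.
by move=> nn0; split; apply: contraNneq nn0 => ->;
  apply/eqP/row3P; rewrite !coordE; ring.
Qed.

Lemma dotv_tau_eq0 (m p q : vec) : p != q -> dotv m (tau p q) = 0 -> dotv m (q - p) = 0.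
Proof.
move=> pq; rewrite dotvZr => /eqP; rewrite mulf_eq0 invr_eq0 => /orP[|/eqP //].
by rewrite gt_eqF // enorm_gt0 // subr_eq0 eq_sym.
Qed.

Lemma fnorm_ge0 (M : 'M[R]_3) : 0 <= fnorm M.
Proof. exact: sqrtr_ge0. Qed.

Lemma nbar_unit k : noncollinear k -> dotv (nbar k) (nbar k) = 1.
Proof. exact: dotv_scale_unitv (sqr_sign _). Qed.

Lemma is_edge_two_points k e : noncollinear k -> is_edge k e ->
  exists p q, [/\ p != q, e p & e q].
Proof.
move=> /cross_neq0_vertices[xy yz zx].
by case=> [|[|]] ->; [exists (vx k), (vy k) | exists (vy k), (vz k) | exists (vz k), (vx k)];
  split=> //; first [exact: seg_start | exact: seg_end].
Qed.

Lemma common_edge_is_edge T k k' e : tri_complex T -> k \in T -> k' \in T ->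
  hull k <> hull k' -> edges T e -> e = hull k `&` hull k' ->
  is_edge k e /\ is_edge k' e.
Proof.
case=> noncol [_ meet] kT k'T neq [k'' [k''T k''e]] eI.
have [p [q [pq ep eq]]] := is_edge_two_points (noncol k'' k''T) k''e.
move: (meet k k' kT k'T neq); rewrite /= -eI => -[e0 | [[w [_ _ ew]] | [e' [ke' k'e' ->]]]] //.
- by move: ep; rewrite e0.
- by move: ep eq pq; rewrite ew => /= -> ->; rewrite eqxx.
Qed.

Lemma rejection_edge_area_le T n k e M (L : R) :
  tri_complex T -> pseudo_unit T n -> k \in T -> is_edge k e -> isDn k n M ->
  (forall p q, e p -> e q -> enorm (p - q) <= L) ->
  enorm (rejection (n e) (nbar k)) * (2 * area k) <= L * diam k ^+ 2 * fnorm M / 2.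
Proof.
move=> [noncol _] [tangent _] kT ke [A [b [mxy myz mzx ->]]] le_e.
have [txy tyz tzx] := tangent k kT.
have nn0 := noncol k kT.
have area2 : 2 * area k = enorm (cross (vy k - vx k) (vz k - vx k)).
  by rewrite /area mulrA mulfV ?mul1r ?pnatr_eq0.
suff side p q r : cross (q - p) (r - p) = cross (vy k - vx k) (vz k - vx k) ->
    hull k p -> hull k q -> hull k r -> e = seg p q ->
    midp p q *m A + b = n (seg p q) -> midp r p *m A + b = n (seg r p) ->
    dotv (n (seg p q)) (tau p q) = 0 -> dotv (n (seg r p)) (tau r p) = 0 ->
    enorm (rejection (n e) (nbar k)) * (2 * area k) <= L * diam k ^+ 2 * fnorm (projP k *m A) / 2.
  (* each edge is [seg p q] for a cyclic relabelling of the vertices *)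
  case: ke => [|[|]] ke.
  - exact: side erefl (hull_vx k) (hull_vy k) (hull_vz k) ke mxy mzx txy tzx.
  - exact: side (cross_rot _ _ _) (hull_vy k) (hull_vz k) (hull_vx k) ke myz mxy tyz txy.
  - exact: side (esym (cross_rot _ _ _)) (hull_vz k) (hull_vx k) (hull_vy k) ke mzx myz tzx tyz.
move=> rot kp kq kr e_pq hv hu tv tu; subst e.
have [pq _ rp] : [/\ p != q, q != r & r != p] by apply: cross_neq0_vertices; rewrite rot.
have := rejection_interpolant_le _ (sqr_sign (sgn k)) _ hv hu
  (dotv_tau_eq0 pq tv) (dotv_tau_eq0 rp tu).
rewrite rot area2 => /(_ (nbar k) erefl nn0) le_rej.
have le_qp : enorm (q - p) <= L := le_e q p (seg_end p q) (seg_start p q).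
have le_sides : enorm (q - p) * enorm (r - p) * enorm (q - r) <= L * diam k * diam k.
  apply: ler_pM; rewrite ?mulr_ge0 ?enorm_ge0 ?diam_ub //.
  by apply: ler_pM; rewrite ?enorm_ge0 ?diam_ub.
have := ler_wpM2r (fnorm_ge0 (projP k *m A)) le_sides; rewrite /projP in le_rej *; lra.
Qed.

Lemma rejection_edge_le (Cs : R) T n k e M (L : R) : 0 < Cs ->
  tri_complex T -> regular Cs T -> pseudo_unit T n -> k \in T -> is_edge k e -> isDn k n M ->
  (forall p q, e p -> e q -> enorm (p - q) <= L) ->
  enorm (rejection (n e) (nbar k)) <= Cs * L * fnorm M / 4.
Proof.
move=> Cs_gt0 cT reg pu kT ke kM le_e.
have le_rej := rejection_edge_area_le cT pu kT ke kM le_e.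
have area_gt0 : 0 < area k by rewrite mulr_gt0 ?invr_gt0 ?enorm_gt0 //; case: cT => ->.
have L_ge0 : 0 <= L.
  have [p [_ [_ ep _]]] := is_edge_two_points (cT.1 k kT) ke.
  exact: le_trans (enorm_ge0 _) (le_e p p ep ep).
have diam_area : diam k ^+ 2 <= Cs * area k.
  by have := ler_wpM2l (ltW Cs_gt0) (reg k kT); rewrite mulrA mulfV ?gt_eqF // mul1r.
rewrite -(ler_pM2r (mulr_gt0 (ltr0Sn _ 1) area_gt0)).
apply: le_trans le_rej _.
have -> : Cs * L * fnorm M / 4 * (2 * area k) = L * fnorm M * (Cs * area k) / 2 by field.
rewrite (mulrAC L) ler_pM2r ?invr_gt0 //.
by have := ler_wpM2l (mulr_ge0 L_ge0 (fnorm_ge0 M)) diam_area.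
Qed.

End EdgeDirector.

Theorem lemmaA2 (R : realType) (Cs : R) (hCs : 1 < Cs) :
  exists C C' : R, 0 < C /\ 0 < C' /\
  forall (T : seq (tri R)) (n : set 'rV[R]_3 -> 'rV[R]_3),
    tri_complex T -> regular Cs T -> pseudo_unit T n ->
    forall (k k' : tri R) (e : set 'rV[R]_3) (M M' : 'M[R]_3),
      k \in T -> k' \in T -> hull k <> hull k' ->
      edges T e -> e = hull k `&` hull k' ->
      isDn k n M -> isDn k' n M' ->
      diam k * (fnorm M + fnorm M') < C ->
      enorm (n e - nbar k) <= C' * (diam k * (fnorm M + fnorm M')).
Proof.
have Cs_gt0 : 0 < Cs := lt_trans ltr01 hCs.
exists (2 / Cs), Cs; split; first by rewrite divr_gt0.
split=> // T n cT reg pu k k' e M M' kT k'T neq eT eI kM k'M.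
rewrite ltr_pdivlMr // => small.
have [ke k'e] := common_edge_is_edge cT kT k'T neq eT eI.
have le_e p q : e p -> e q -> enorm (p - q) <= diam k.
  by rewrite eI => -[kp _] [kq _]; exact: diam_ub.
have rej := rejection_edge_le Cs_gt0 cT reg pu kT ke kM le_e.
have rej' := rejection_edge_le Cs_gt0 cT reg pu k'T k'e k'M le_e.
have n0e : dotv (n e) (unitv (nbar k + nbar k')) = 1.
  by have [_ n0_eq1] := pu; rewrite eI n0_eq1 // -eI.
have unit_k := nbar_unit (cT.1 k kT); have unit_k' := nbar_unit (cT.1 k' k'T).
set X := diam k * (fnorm M + fnorm M') in small *.
have eps_sum : Cs * diam k * fnorm M / 4 + Cs * diam k * fnorm M' / 4 = Cs * X / 4.
  by rewrite /X; field.
apply: le_trans (bisector_near_unit unit_k unit_k' n0e rej rej' _) _; rewrite eps_sum.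
- by rewrite ler_pdivrMr // mulrC (_ : 2^-1 * 4 = 2) ?ltW //; field.
- by rewrite mulrC divfK ?pnatr_eq0.
Qed.
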